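(* For $k\in\mathbb{N}$ let $B(k)=\dfrac{2}{3}\cdot\dfrac{k-1}{(2k+1)!}$. (i) For every $x\in(0,\pi/2)$ and every $n\in\mathbb{N}$, $$\sum_{k=2}^{2n}(-1)^{k+1}B(k)\,x^{2k}<\frac{\sin x}{x}-\frac{\cos x+2}{3}<\sum_{k=2}^{2n+1}(-1)^{k+1}B(k)\,x^{2k}.$$ (ii) For every $x\in(0,\pi/2)$ and every $m\in\mathbb{N}$, $$\Big|\frac{\sin x}{x}-\frac{\cos x+2}{3}-\sum_{k=2}^{m}(-1)^{k+1}B(k)\,x^{2k}\Big|<B(m+1)\,x^{2m+2},$$ where the sum is empty (equal to $0$) when $m=1$.
   Context: $\mathbb{N}=\{1,2,3,\dots\}$. *)

From Stdlib Require Import Reals Arith Factorial.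
Open Scope R_scope.

Definition B (k : nat) : R := 2 / 3 * (INR k - 1) / INR (fact (2 * k + 1)).

Definition term (x : R) (k : nat) : R := (-1) ^ (k + 1) * B k * x ^ (2 * k).

Fixpoint Ssum (x : R) (N : nat) : R :=
  match N with
  | O => 0
  | Datatypes.S N' => if Nat.leb 2 N then Ssum x N' + term x N else 0
  end.

From Stdlib Require Import Reals Lra Lia Psatz.
Open Scope R_scope.

(* Comparing the power series of sin x / x and cos x, the coefficient of x^(2k) in
   sin x / x - (cos x + 2) / 3 is (-1)^k (1/(2k+1)! - 1/(3 (2k)!)) = (-1)^(k+1) B(k),
   and the constant and quadratic coefficients vanish.  For 0 < x < 2 the magnitudes
   B(k) x^(2k), k >= 2, decrease strictly, so by Leibniz's estimate every remainder of
   this alternating series has the sign of its first omitted term and a strictly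
   smaller absolute value. *)

Lemma Un_cv_const (c : R) : Un_cv (fun _ => c) c.
Proof.
  intros eps Heps; exists O; intros n _.
  unfold R_dist; rewrite Rminus_diag, Rabs_R0; exact Heps.
Qed.

Lemma Un_cv_series_terms_0 (u : nat -> R) (l : R) :
  Un_cv (sum_f_R0 u) l -> Un_cv u 0.
Proof.
  intros Hcv eps Heps.
  destruct (Hcv (eps / 2)) as [N HN]; [lra|].
  exists (S N); intros [|n] Hn; [lia|].
  assert (Hnext := HN (S n) ltac:(lia)); assert (Hcur := HN n ltac:(lia)).
  unfold R_dist in *; simpl in Hnext.
  apply Rabs_def2 in Hnext; apply Rabs_def2 in Hcur.
  apply Rabs_def1; lra.
Qed.

Lemma neg1_pow_sqr (n : nat) : (-1) ^ n * (-1) ^ n = 1.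
Proof. rewrite <- Rpow_mult_distr; replace (-1 * -1) with 1 by ring; apply pow1. Qed.

Section AlternatingRemainder.

Variables (b : nat -> R) (l : R) (m : nat).
Hypothesis b_decr : forall k, (m < k)%nat -> b (S k) < b k.
Hypothesis alt_cv : Un_cv (sum_f_R0 (tg_alt b)) l.

Let tail (j : nat) : R := b (S m + j).

Lemma alt_tail_sum (N : nat) :
  sum_f_R0 (tg_alt tail) N =
  (-1) ^ S m * (sum_f_R0 (tg_alt b) (S m + N) - sum_f_R0 (tg_alt b) m).
Proof.
  rewrite (tech2 _ m (S m + N)) by lia.
  replace (S m + N - S m)%nat with N by lia.
  rewrite Rplus_comm; unfold Rminus; rewrite Rplus_assoc, Rplus_opp_r, Rplus_0_r.
  rewrite scal_sum; apply sum_eq; intros i _.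
  unfold tg_alt, tail; rewrite pow_add.
  transitivity ((-1) ^ i * b (S m + i) * ((-1) ^ S m * (-1) ^ S m)).
  - rewrite neg1_pow_sqr; ring.
  - ring.
Qed.

Lemma alt_tail_cv :
  Un_cv (sum_f_R0 (tg_alt tail)) ((-1) ^ S m * (l - sum_f_R0 (tg_alt b) m)).
Proof.
  intros eps Heps; destruct (alt_cv eps Heps) as [N HN].
  exists N; intros n Hn; unfold R_dist.
  rewrite alt_tail_sum, <- Rmult_minus_distr_l, Rabs_mult, pow_1_abs, Rmult_1_l.
  replace (_ - _ - _) with (sum_f_R0 (tg_alt b) (S m + n) - l) by ring.
  apply HN; lia.
Qed.

Lemma alternating_remainder_bounds :
  0 < (-1) ^ S m * (l - sum_f_R0 (tg_alt b) m) < b (S m).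
Proof.
  assert (tail_decr : forall j, tail (S j) < tail j).
  { intro j; unfold tail; rewrite <- plus_n_Sm; apply b_decr; lia. }
  assert (tail_cv0 : Un_cv tail 0).
  { intros eps Heps.
    destruct (Un_cv_series_terms_0 _ _ alt_tail_cv eps Heps) as [N HN].
    exists N; intros n Hn; specialize (HN n Hn); unfold R_dist, tg_alt in *.
    rewrite !Rminus_0_r, Rabs_mult, pow_1_abs, Rmult_1_l in HN.
    rewrite Rminus_0_r; exact HN. }
  (* Leibniz's bounds for N = 1 put the remainder between t0 - t1 + t2 - t3 and
     t0 - t1 + t2; strict decrease makes these strictly between 0 and t0. *)
  destruct (alternated_series_ineq tail _ 1 (fun j => Rlt_le _ _ (tail_decr j))
              tail_cv0 alt_tail_cv) as [lower upper].
  assert (tail0 : tail O = b (S m)) by (unfold tail; f_equal; lia).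
  assert (d0 := tail_decr O); assert (d1 := tail_decr 1%nat); assert (d2 := tail_decr 2%nat).
  unfold tg_alt in *; simpl in *.
  split; lra.
Qed.

End AlternatingRemainder.

Definition Bterm (x : R) (k : nat) : R := B k * x ^ (2 * k).

Lemma B_succ_mul (k : nat) :
  B (S k) * ((INR k - 1) * (2 * INR k + 2) * (2 * INR k + 3)) = INR k * B k.
Proof.
  unfold B.
  replace (2 * S k + 1)%nat with (S (S (2 * k + 1))) by lia.
  rewrite !fact_simpl, !mult_INR, !S_INR, plus_INR, mult_INR; simpl (INR 2); simpl (INR 1).
  assert (Hfact := INR_fact_neq_0 (2 * k + 1)); assert (Hk := pos_INR k).
  field; split; [exact Hfact | lra].
Qed.

Lemma Bterm_decreasing (x : R) (k : nat) :
  0 < x < 2 -> (2 <= k)%nat -> Bterm x (S k) < Bterm x k.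
Proof.
  intros Hx Hk.
  assert (Hk2 : 2 <= INR k) by (apply (le_INR 2); exact Hk).
  assert (Bk_pos : 0 < B k).
  { unfold B; apply Rdiv_lt_0_compat; [lra | apply INR_fact_lt_0]. }
  assert (Hpow : 0 < x ^ (2 * k)) by (apply pow_lt; lra).
  set (D := (INR k - 1) * (2 * INR k + 2) * (2 * INR k + 3)).
  assert (D_big : INR k * 4 < D) by (unfold D; nra).
  assert (Hsucc := B_succ_mul k); fold D in Hsucc.
  unfold Bterm; replace (2 * S k)%nat with (2 * k + 2)%nat by lia.
  rewrite pow_add.
  apply Rmult_lt_reg_r with D; [lra|].
  replace (B (S k) * (x ^ (2 * k) * x ^ 2) * D)
    with (INR k * x ^ 2 * (B k * x ^ (2 * k)))
    by (transitivity (INR k * B k * x ^ (2 * k) * x ^ 2); [ring | rewrite <- Hsucc; ring]).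
  assert (Hx2 : INR k * x ^ 2 < D).
  { assert (x ^ 2 < 4) by (simpl; nra). nra. }
  rewrite (Rmult_comm (B k * x ^ (2 * k)) D).
  apply Rmult_lt_compat_r; [apply Rmult_lt_0_compat|]; assumption.
Qed.

Lemma B_sin_cos_coef (k : nat) : (-1) ^ S k * B k = sin_n k - / 3 * cos_n k.
Proof.
  unfold B, sin_n, cos_n.
  replace (2 * k + 1)%nat with (S (2 * k)) by lia.
  rewrite fact_simpl, mult_INR, S_INR, mult_INR; simpl (INR 2); simpl pow.
  assert (Hfact := INR_fact_neq_0 (2 * k)); assert (Hk := pos_INR k).
  field; split; [exact Hfact | lra].
Qed.

(* The k-th term (-1)^k B(k+1) x^(2k+2) is the paper's term of index k + 1; the k = 0
   term vanishes because B 1 = 0. *)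
Lemma Ssum_succ_alt (x : R) (n : nat) :
  Ssum x (S n) = sum_f_R0 (tg_alt (fun k => Bterm x (S k))) n.
Proof.
  induction n as [|n IHn].
  - unfold tg_alt, Bterm, B; simpl; field.
  - change (Ssum x (S (S n))) with (Ssum x (S n) + term x (S (S n))).
    rewrite IHn; simpl sum_f_R0; f_equal.
    unfold term, tg_alt, Bterm; replace (S (S n) + 1)%nat with (S (S (S n))) by lia.
    simpl pow; ring.
Qed.

Lemma tg_alt_Bterm (x : R) (k : nat) :
  tg_alt (fun j => Bterm x (S j)) k = (sin_n (S k) - / 3 * cos_n (S k)) * (x * x) ^ S k.
Proof.
  unfold tg_alt, Bterm; rewrite <- B_sin_cos_coef, pow_mult.
  replace ((x ^ 2) ^ S k) with ((x * x) ^ S k) by (f_equal; ring).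
  simpl pow; ring.
Qed.

Lemma alt_Bterm_partial_sum (x : R) (n : nat) :
  sum_f_R0 (tg_alt (fun k => Bterm x (S k))) n =
  sum_f_R0 (fun i => sin_n i * (x * x) ^ i) (S n) -
  (sum_f_R0 (fun i => cos_n i * (x * x) ^ i) (S n) + 2) / 3.
Proof.
  induction n as [|n IHn].
  - simpl sum_f_R0; rewrite tg_alt_Bterm; unfold sin_n, cos_n; simpl; field.
  - change (sum_f_R0 (tg_alt (fun k => Bterm x (S k))) (S n))
      with (sum_f_R0 (tg_alt (fun k => Bterm x (S k))) n + tg_alt (fun k => Bterm x (S k)) (S n)).
    rewrite IHn, tg_alt_Bterm; cbn [sum_f_R0]; lra.
Qed.

Lemma sinc_cos_series (x : R) : x <> 0 ->
  Un_cv (sum_f_R0 (tg_alt (fun k => Bterm x (S k)))) (sin x / x - (cos x + 2) / 3).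
Proof.
  intro Hx.
  assert (sin_cv : Un_cv (sum_f_R0 (fun i => sin_n i * (x * x) ^ i)) (sin x / x)).
  { unfold sin; destruct (exist_sin (Rsqr x)) as [s Hs].
    replace (x * s / x) with s by (field; exact Hx); exact Hs. }
  assert (cos_cv : Un_cv (sum_f_R0 (fun i => cos_n i * (x * x) ^ i)) (cos x)).
  { unfold cos; destruct (exist_cos (Rsqr x)) as [c Hc]; exact Hc. }
  assert (Hcv := CV_minus _ _ _ _ sin_cv
                   (CV_mult _ _ _ _ (CV_plus _ _ _ _ cos_cv (Un_cv_const 2)) (Un_cv_const (/ 3)))).
  apply CV_shift' with (k := 1%nat) in Hcv.
  refine (Un_cv_ext _ _ _ _ Hcv); intro n.
  rewrite alt_Bterm_partial_sum, Nat.add_1_r; reflexivity.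
Qed.

Lemma sinc_cos_remainder (x : R) (m : nat) : 0 < x < 2 -> (1 <= m)%nat ->
  0 < (-1) ^ m * (sin x / x - (cos x + 2) / 3 - Ssum x m) < B (m + 1) * x ^ (2 * m + 2).
Proof.
  intros Hx Hm; destruct m as [|n]; [lia|].
  rewrite Ssum_succ_alt.
  replace (B (S n + 1) * x ^ (2 * S n + 2)) with (Bterm x (S (S n)))
    by (unfold Bterm; f_equal; [f_equal | f_equal]; lia).
  apply (alternating_remainder_bounds (fun k => Bterm x (S k))).
  - intros k Hk; apply Bterm_decreasing; [exact Hx | lia].
  - apply sinc_cos_series; lra.
Qed.

Theorem theorem2 :
  (forall (x : R) (n : nat), 0 < x < PI / 2 -> (1 <= n)%nat ->
     Ssum x (2 * n) < sin x / x - (cos x + 2) / 3 < Ssum x (2 * n + 1)) /\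
  (forall (x : R) (m : nat), 0 < x < PI / 2 -> (1 <= m)%nat ->
     Rabs (sin x / x - (cos x + 2) / 3 - Ssum x m) < B (m + 1) * x ^ (2 * m + 2)).
Proof.
  assert (x_lt_2 : forall x, 0 < x < PI / 2 -> 0 < x < 2) by (intros x Hx; pose proof PI_4; lra).
  split.
  - intros x n Hx Hn.
    destruct (sinc_cos_remainder x (2 * n) (x_lt_2 x Hx) ltac:(lia)) as [even _].
    destruct (sinc_cos_remainder x (2 * n + 1) (x_lt_2 x Hx) ltac:(lia)) as [odd _].
    rewrite Nat.add_1_r in odd |- *; rewrite pow_1_even in even; rewrite pow_1_odd in odd.
    lra.
  - intros x m Hx Hm.
    destruct (sinc_cos_remainder x m (x_lt_2 x Hx) Hm) as [pos bound].
    rewrite <- (Rmult_1_l (Rabs _)), <- (pow_1_abs m), <- Rabs_mult, Rabs_right by lra.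
    exact bound.
Qed.
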